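(* Let $T$ be a countable tree with root $o$, and let $Q$ be a stochastic matrix on $T$ with $q(x,y)>0$ iff $x=y^-$. Let $\lambda\in\mathbb{C}\setminus\{0\}$ and let $f$ be a $\lambda$-polyharmonic function of order $n\ge1$ for $Q$. Then $$f(x)=\sum_{k=0}^{n-1}|x|^k\,h_k(x),\qquad x\in T,$$ where $h_0,\dots,h_{n-1}$ are $\lambda$-harmonic functions for $Q$, uniquely determined by $f$.
   Context: $|x|=d(o,x)$. $x^-$ is the neighbour of $x\ne o$ closer to $o$. $Qf(x)=\sum_{y:\,y^-=x}q(x,y)f(y)$, required to converge absolutely. $h$ is $\lambda$-harmonic for $Q$ if $Qh=\lambda h$. $f$ is $\lambda$-polyharmonic of order $n$ for $Q$ if $(\lambda I-Q)^nf=0$, where all successive applications of $Q$ are well defined. *)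

From Stdlib Require Import Reals ClassicalEpsilon.
From Coquelicot Require Import Coquelicot.
From mathcomp Require Import ssreflect ssrfun ssrbool eqtype ssrnat seq choice.

Set Implicit Arguments.
Unset Strict Implicit.

Section Tree.
Variables (T : countType) (o : T) (parent : T -> T).

(* A rooted tree on T: every vertex x <> o has parent x (= x^-), and
   iterating the parent map from any vertex reaches the root o. *)
Definition rooted_tree : Prop := forall x : T, exists k : nat, iter k parent x = o.

Definition is_child (x y : T) : bool := (y != o) && (parent y == x).

Definition is_depth (x : T) (k : nat) : Prop :=
  iter k parent x = o /\ (forall j, (j < k)%N -> iter j parent x <> o).

Definition depth (x : T) : nat := epsilon (inhabits 0%nat) (is_depth x).

Variable q : T -> T -> R.

(* terms of the series  sum_{y : y^- = x} q(x,y) g(y), along the enumeration of T *)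
Definition Qterm (g : T -> C) (x : T) (n : nat) : C :=
  match @pickle_inv T n with
  | Some y => if is_child x y then Cmult (RtoC (q x y)) (g y) else RtoC 0
  | None => RtoC 0
  end.

Definition Qdef (g : T -> C) : Prop :=
  forall x, ex_series (fun n => Cmod (Qterm g x n)).

Definition Qop (g : T -> C) (x : T) : C :=
  (Series (fun n => fst (Qterm g x n)), Series (fun n => snd (Qterm g x n))).

Definition rowterm (x : T) (n : nat) : R :=
  match @pickle_inv T n with Some y => q x y | None => 0%R end.

Definition stochastic_forward : Prop :=
  (forall x y, (0 <= q x y)%R) /\
  (forall x y, (0 < q x y)%R <-> is_child x y) /\
  (forall x, is_series (rowterm x) 1%R).

Variable lam : C.

Definition harmonic (h : T -> C) : Prop :=
  Qdef h /\ forall x, Qop h x = Cmult lam (h x).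

Fixpoint Liter (k : nat) (f : T -> C) : T -> C :=
  match k with
  | O => f
  | S k' => fun x => Cminus (Cmult lam (Liter k' f x)) (Qop (Liter k' f) x)
  end.

Definition polyharmonic (n : nat) (f : T -> C) : Prop :=
  (forall k, (k < n)%N -> Qdef (Liter k f)) /\ (forall x, Liter n f x = RtoC 0).

Definition poly_expansion (n : nat) (h : nat -> T -> C) (x : T) : C :=
  sum_n (fun k => Cmult (RtoC (pow (INR (depth x)) k)) (h k x)) (n - 1).

End Tree.

(* Every child y of x has |y| = |x| + 1, so Q (P(|.|) g) (x) = P(|x| + 1) (Q g)(x)
   for every P : nat -> C.  Hence, on a lambda-harmonic h, the operator
   lambda I - Q acts on P(|.|) h as lambda times the difference operator
   P |-> P(m) - P(m + 1) acts on P, and iterating, (lambda I - Q)^j kills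
   |x|^k h for k < j and maps |x|^j h to lambda^j (-1)^j j! h.  Uniqueness
   follows by applying (lambda I - Q)^(n-1) to two expansions, which isolates
   the top coefficient, and peeling it off.  Existence is by induction on n:
   g = (lambda I - Q)^(n-1) f is harmonic, and subtracting |x|^(n-1) h with
   h = g / (lambda^(n-1) (-1)^(n-1) (n-1)!) leaves a polyharmonic function of
   order n - 1. *)

From Stdlib Require Import Reals Lra Factorial FunctionalExtensionality ClassicalEpsilon.
From Coquelicot Require Import Coquelicot.
From mathcomp Require Import ssreflect ssrfun ssrbool eqtype ssrnat seq choice.

Set Implicit Arguments.
Unset Strict Implicit.

Local Open Scope C_scope.

(* Minus the forward difference, so that (lam I - Q) (P(|.|) h) = lam (fdiff P)(|.|) h
   for lam-harmonic h. *)
Definition fdiff (P : nat -> C) (m : nat) : C := P m - P m.+1.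

Definition monom (k m : nat) : C := RtoC (INR m ^ k).

Definition fdiff_top (k : nat) : C := (- 1) ^ k * INR (fact k).

Lemma RtoC_neq0 (r : R) : r <> 0%R -> RtoC r <> 0.
Proof. by move=> r0 [] /r0. Qed.

Lemma fdiff_top_neq0 k : fdiff_top k <> 0.
Proof.
apply: Cmult_neq_0; first by apply: Cpow_nz; apply: RtoC_neq0; lra.
exact/RtoC_neq0/INR_fact_neq_0.
Qed.

Lemma iter_fdiffS j (u : nat -> C) m :
  iter j.+1 fdiff u m = iter j fdiff u m - iter j fdiff u m.+1.
Proof. by []. Qed.

Lemma iter_fdiff_mulINR j (u : nat -> C) m :
  iter j.+1 fdiff (fun m => INR m * u m) m =
  INR m * iter j.+1 fdiff u m - INR j.+1 * iter j fdiff u m.+1.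
Proof.
elim: j m => [|j IH] m.
  by rewrite /= /fdiff S_INR RtoC_plus; ring.
rewrite iter_fdiffS !IH [iter j.+2 _ _ _]iter_fdiffS [iter j.+1 _ _ m.+1]iter_fdiffS.
rewrite [INR j.+2]S_INR [INR m.+1]S_INR !RtoC_plus; ring.
Qed.

Lemma monomS k : monom k.+1 = fun m => INR m * monom k m.
Proof. by apply: functional_extensionality => m; rewrite /monom /= RtoC_mult. Qed.

Lemma iter_fdiff_monom_diag k m : iter k fdiff (monom k) m = fdiff_top k.
Proof.
elim: k m => [|k IH] m.
  by rewrite /monom /fdiff_top /=; ring.
rewrite monomS iter_fdiff_mulINR iter_fdiffS !IH /fdiff_top fact_simpl mult_INR.
by rewrite Cpow_S RtoC_mult; ring.
Qed.

Lemma iter_fdiff_monom_vanish j k m : (k < j)%N -> iter j fdiff (monom k) m = 0.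
Proof.
elim: j m => [|j IH] m //; rewrite ltnS leq_eqVlt iter_fdiffS.
case/orP => [/eqP ->|lt_kj]; first by rewrite !iter_fdiff_monom_diag; ring.
by rewrite !IH //; ring.
Qed.

Lemma sum_n_last (a : nat -> C) N : (forall k, (k < N)%N -> a k = 0) -> sum_n a N = a N.
Proof.
case: N => [|N] a0; first by rewrite sum_O.
rewrite sum_Sn (sum_n_ext_loc _ (fun _ => zero)) => [|k /leP le_kN]; last exact: a0.
by rewrite [sum_n _ _]sum_n_m_const_zero plus_zero_l.
Qed.

Lemma Cmult_reg_l (a u v : C) : a <> 0 -> a * u = a * v -> u = v.
Proof.
move=> a0 E; rewrite -[u]Cmult_1_l -[v]Cmult_1_l -(Cinv_l a a0).
by rewrite -!Cmult_assoc E.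
Qed.

Definition Cseries (u : nat -> C) : C :=
  (Series (fun n => fst (u n)), Series (fun n => snd (u n))).

Lemma ex_series_fst (u : nat -> C) :
  ex_series (fun n => Cmod (u n)) -> ex_series (fun n => fst (u n)).
Proof.
apply: ex_series_le => n; apply: Rle_trans (Rmax_Cmod (u n)); exact: Rmax_l.
Qed.

Lemma ex_series_snd (u : nat -> C) :
  ex_series (fun n => Cmod (u n)) -> ex_series (fun n => snd (u n)).
Proof.
apply: ex_series_le => n; apply: Rle_trans (Rmax_Cmod (u n)); exact: Rmax_r.
Qed.

Lemma ex_series_Cmod_plus (u v : nat -> C) :
  ex_series (fun n => Cmod (u n)) -> ex_series (fun n => Cmod (v n)) ->
  ex_series (fun n => Cmod (u n + v n)).
Proof.
move=> Hu Hv; apply: (ex_series_le _ _ _ (ex_series_plus _ _ Hu Hv)) => n.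
rewrite /norm /= /abs /= Rabs_pos_eq; [exact: Cmod_triangle | exact: Cmod_ge_0].
Qed.

Lemma ex_series_Cmod_scal (a : C) (u : nat -> C) :
  ex_series (fun n => Cmod (u n)) -> ex_series (fun n => Cmod (a * u n)).
Proof.
move=> Hu; apply: ex_series_ext (ex_series_scal_l _ _ Hu) => n.
by rewrite Cmod_mult.
Qed.

Lemma Cseries_plus (u v : nat -> C) :
  ex_series (fun n => Cmod (u n)) -> ex_series (fun n => Cmod (v n)) ->
  Cseries (fun n => u n + v n) = Cseries u + Cseries v.
Proof.
move=> Hu Hv; rewrite /Cseries /Cplus /=.
by rewrite !Series_plus //; apply: ex_series_fst || apply: ex_series_snd.
Qed.

Lemma Cseries_scal (a : C) (u : nat -> C) :
  ex_series (fun n => Cmod (u n)) -> Cseries (fun n => a * u n) = a * Cseries u.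
Proof.
move=> Hu; rewrite /Cseries /Cmult /=.
have [Hfst Hsnd] := (ex_series_fst Hu, ex_series_snd Hu).
by rewrite Series_minus ?Series_plus ?Series_scal_l //; apply: ex_series_scal_l.
Qed.

Section Tree.

Variables (T : countType) (o : T) (parent : T -> T).
Hypothesis rooted : rooted_tree o parent.

Lemma depth_spec x : is_depth o parent x (depth o parent x).
Proof.
rewrite /depth; apply: epsilon_spec.
have [k /eqP Hk] := rooted x.
have ex_k : exists k, iter k parent x == o by exists k.
have [m /eqP Hm m_min] := ex_minnP ex_k.
exists m; split => // j lt_jm /eqP Hj.
by move: (m_min j Hj); rewrite leqNgt lt_jm.
Qed.

Lemma depth_unique x a b : is_depth o parent x a -> is_depth o parent x b -> a = b.
Proof.
move=> [Ha Ha'] [Hb Hb'].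
by case: (ltngtP a b) => // lt; [case: (Hb' _ lt) | case: (Ha' _ lt)].
Qed.

Lemma depth_child x y : is_child o parent x y -> depth o parent y = (depth o parent x).+1.
Proof.
case/andP => y_neq_o /eqP <-; apply: depth_unique (depth_spec y) _.
have [Hx Hx'] := depth_spec (parent y).
split; first by rewrite iterSr.
case=> [_ /eqP|j]; first by rewrite (negbTE y_neq_o).
by rewrite ltnS iterSr; exact: Hx'.
Qed.

Definition depth_sum (P : nat -> nat -> C) (h : nat -> T -> C) (N : nat) (x : T) : C :=
  sum_n (fun k => P k (depth o parent x) * h k x) N.

Lemma depth_sum0 P h : depth_sum P h 0 = fun x => P 0%N (depth o parent x) * h 0%N x.
Proof. by apply: functional_extensionality => x; rewrite /depth_sum sum_O. Qed.

Lemma depth_sumS P h N :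
  depth_sum P h N.+1 = fun x => depth_sum P h N x + P N.+1 (depth o parent x) * h N.+1 x.
Proof. by apply: functional_extensionality => x; rewrite /depth_sum sum_Sn. Qed.

Variable q : T -> T -> R.

Lemma QopE g x : Qop o parent q g x = Cseries (Qterm o parent q g x).
Proof. by []. Qed.

Lemma Qterm_plus g1 g2 x :
  Qterm o parent q (fun y => g1 y + g2 y) x =
  fun n => Qterm o parent q g1 x n + Qterm o parent q g2 x n.
Proof.
apply: functional_extensionality => n; rewrite /Qterm.
by case: pickle_inv => [y|]; [case: ifP => _|]; ring.
Qed.

Lemma Qterm_minus g1 g2 x :
  Qterm o parent q (fun y => g1 y - g2 y) x =
  fun n => Qterm o parent q g1 x n + (- 1) * Qterm o parent q g2 x n.
Proof.
apply: functional_extensionality => n; rewrite /Qterm.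
by case: pickle_inv => [y|]; [case: ifP => _|]; ring.
Qed.

Lemma Qterm_depth_mul P g x :
  Qterm o parent q (fun y => P (depth o parent y) * g y) x =
  fun n => P (depth o parent x).+1 * Qterm o parent q g x n.
Proof.
apply: functional_extensionality => n; rewrite /Qterm.
case: pickle_inv => [y|]; last by ring.
by case: ifP => [/depth_child ->|_]; ring.
Qed.

Lemma Qdef_plus g1 g2 :
  Qdef o parent q g1 -> Qdef o parent q g2 -> Qdef o parent q (fun y => g1 y + g2 y).
Proof. by move=> H1 H2 x; rewrite Qterm_plus; apply: ex_series_Cmod_plus. Qed.

Lemma Qop_plus g1 g2 x :
  Qdef o parent q g1 -> Qdef o parent q g2 ->
  Qop o parent q (fun y => g1 y + g2 y) x = Qop o parent q g1 x + Qop o parent q g2 x.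
Proof. by move=> H1 H2; rewrite !QopE Qterm_plus Cseries_plus. Qed.

Lemma Qdef_minus g1 g2 :
  Qdef o parent q g1 -> Qdef o parent q g2 -> Qdef o parent q (fun y => g1 y - g2 y).
Proof.
move=> H1 H2 x; rewrite Qterm_minus.
by apply: ex_series_Cmod_plus => //; apply: ex_series_Cmod_scal.
Qed.

Lemma Qop_minus g1 g2 x :
  Qdef o parent q g1 -> Qdef o parent q g2 ->
  Qop o parent q (fun y => g1 y - g2 y) x = Qop o parent q g1 x - Qop o parent q g2 x.
Proof.
move=> H1 H2; rewrite !QopE Qterm_minus Cseries_plus ?Cseries_scal //.
- ring.
- exact: ex_series_Cmod_scal.
Qed.

Lemma Qdef_depth_mul P g :
  Qdef o parent q g -> Qdef o parent q (fun y => P (depth o parent y) * g y).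
Proof. by move=> Hg x; rewrite Qterm_depth_mul; apply: ex_series_Cmod_scal. Qed.

Lemma Qop_depth_mul P g x :
  Qdef o parent q g ->
  Qop o parent q (fun y => P (depth o parent y) * g y) x =
  P (depth o parent x).+1 * Qop o parent q g x.
Proof. by move=> Hg; rewrite !QopE Qterm_depth_mul Cseries_scal. Qed.

Lemma Qdef_depth_sum P h N :
  (forall k, (k <= N)%N -> Qdef o parent q (h k)) -> Qdef o parent q (depth_sum P h N).
Proof.
elim: N => [|N IH] Hh; first by rewrite depth_sum0; apply/Qdef_depth_mul/Hh.
rewrite depth_sumS; apply: Qdef_plus; last exact/Qdef_depth_mul/Hh.
by apply: IH => k le_kN; apply/Hh/leqW.
Qed.

Variable lam : C.

Definition Lop (g : T -> C) (x : T) : C := lam * g x - Qop o parent q g x.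

Lemma LiterS k f : Liter o parent q lam k.+1 f = Lop (Liter o parent q lam k f).
Proof. by []. Qed.

Lemma Lop_plus g1 g2 :
  Qdef o parent q g1 -> Qdef o parent q g2 ->
  Lop (fun y => g1 y + g2 y) = fun x => Lop g1 x + Lop g2 x.
Proof.
move=> H1 H2; apply: functional_extensionality => x.
by rewrite /Lop Qop_plus //; ring.
Qed.

Lemma Lop_minus g1 g2 :
  Qdef o parent q g1 -> Qdef o parent q g2 ->
  Lop (fun y => g1 y - g2 y) = fun x => Lop g1 x - Lop g2 x.
Proof.
move=> H1 H2; apply: functional_extensionality => x.
by rewrite /Lop Qop_minus //; ring.
Qed.

Lemma Lop_depth_mul P h :
  harmonic o parent q lam h ->
  Lop (fun y => P (depth o parent y) * h y) =
  fun x => lam * fdiff P (depth o parent x) * h x.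
Proof.
case=> Hdef Hh; apply: functional_extensionality => x.
by rewrite /Lop Qop_depth_mul // Hh /fdiff; ring.
Qed.

Lemma harmonic_scal c h :
  harmonic o parent q lam h -> harmonic o parent q lam (fun y => c * h y).
Proof.
case=> Hdef Hh; split; first exact: (Qdef_depth_mul (fun _ => c)).
by move=> x; rewrite (Qop_depth_mul (fun _ => c)) // Hh; ring.
Qed.

Lemma Liter_minus k f1 f2 :
  (forall j, (j < k)%N -> Qdef o parent q (Liter o parent q lam j f1)) ->
  (forall j, (j < k)%N -> Qdef o parent q (Liter o parent q lam j f2)) ->
  Liter o parent q lam k (fun y => f1 y - f2 y) =
  fun x => Liter o parent q lam k f1 x - Liter o parent q lam k f2 x.
Proof.
elim: k => [//|k IH] H1 H2.
rewrite LiterS IH => [|j /ltnW|j /ltnW]; [|exact: H1|exact: H2].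
by apply: Lop_minus; [apply: H1 | apply: H2].
Qed.

Lemma harmonic_Liter_top n f :
  polyharmonic o parent q lam n.+1 f -> harmonic o parent q lam (Liter o parent q lam n f).
Proof.
case=> Hdef H0; split=> [|x]; first exact: Hdef.
by symmetry; apply/Ceq_minus; exact: H0.
Qed.

Lemma polyharmonic_sub n f u :
  polyharmonic o parent q lam n.+1 f ->
  (forall j, Qdef o parent q (Liter o parent q lam j u)) ->
  (forall x, Liter o parent q lam n u x = Liter o parent q lam n f x) ->
  polyharmonic o parent q lam n (fun y => f y - u y).
Proof.
case=> Hdef _ Hu Hn.
have E k : (k <= n)%N -> Liter o parent q lam k (fun y => f y - u y) =
    fun x => Liter o parent q lam k f x - Liter o parent q lam k u x.
  move=> le_kn; apply: Liter_minus => j lt_jk; last exact: Hu.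
  by apply: Hdef; apply: leq_trans lt_jk (leqW le_kn).
split=> [k lt_kn|x]; last by rewrite E // Hn; ring.
rewrite E; last exact: ltnW.
by apply: Qdef_minus; [apply/Hdef/ltnW | apply: Hu].
Qed.

Lemma Lop_depth_sum P h N :
  (forall k, (k <= N)%N -> harmonic o parent q lam (h k)) ->
  Lop (depth_sum P h N) = depth_sum (fun k m => lam * fdiff (P k) m) h N.
Proof.
elim: N => [|N IH] Hh; first by rewrite !depth_sum0 Lop_depth_mul //; exact: Hh.
have Hh' k : (k <= N)%N -> harmonic o parent q lam (h k) by move=> le_kN; apply/Hh/leqW.
rewrite !depth_sumS Lop_plus ?IH ?Lop_depth_mul //; first exact: Hh.
- by apply: Qdef_depth_sum => k /Hh' [].
- by apply: Qdef_depth_mul; case: (Hh N.+1 (leqnn _)).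
Qed.

Lemma Liter_depth_sum P h N j :
  (forall k, (k <= N)%N -> harmonic o parent q lam (h k)) ->
  Liter o parent q lam j (depth_sum P h N) =
  depth_sum (fun k m => lam ^ j * iter j fdiff (P k) m) h N.
Proof.
move=> Hh; elim: j => [|j IH].
  apply: functional_extensionality => x; apply: sum_n_ext => k /=; ring.
rewrite LiterS IH Lop_depth_sum //.
apply: functional_extensionality => x; apply: sum_n_ext => k.
by rewrite /= /fdiff; ring.
Qed.

Lemma Liter_depth_mul P h j :
  harmonic o parent q lam h ->
  Liter o parent q lam j (fun y => P (depth o parent y) * h y) =
  fun x => lam ^ j * iter j fdiff P (depth o parent x) * h x.
Proof.
move=> Hh; have := @Liter_depth_sum (fun _ => P) (fun _ => h) 0 j (fun _ _ => Hh).
by rewrite !depth_sum0.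
Qed.

Lemma Liter_monom_sum_top h N x :
  (forall k, (k <= N)%N -> harmonic o parent q lam (h k)) ->
  Liter o parent q lam N (depth_sum monom h N) x = lam ^ N * fdiff_top N * h N x.
Proof.
move=> Hh; rewrite Liter_depth_sum // /depth_sum sum_n_last ?iter_fdiff_monom_diag //.
by move=> k lt_kN; rewrite iter_fdiff_monom_vanish //; ring.
Qed.

Hypothesis lam_neq0 : lam <> 0.

Lemma Cpow_fdiff_top_neq0 j : lam ^ j * fdiff_top j <> 0.
Proof. by apply: Cmult_neq_0; [exact: Cpow_nz | exact: fdiff_top_neq0]. Qed.

Lemma polyharmonic_monom_expansion N f :
  polyharmonic o parent q lam N.+1 f ->
  exists h, (forall k, (k <= N)%N -> harmonic o parent q lam (h k)) /\
            forall x, f x = depth_sum monom h N x.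
Proof.
elim: N f => [|N IH] f Hf.
  exists (fun _ => f); split => [k _|x]; first exact: harmonic_Liter_top Hf.
  by rewrite depth_sum0 /monom /=; ring.
set g := Liter o parent q lam N.+1 f.
set c := lam ^ N.+1 * fdiff_top N.+1.
have c_neq0 : c <> 0 by exact: Cpow_fdiff_top_neq0.
set hN := fun y => / c * g y.
have harmonic_hN : harmonic o parent q lam hN by exact/harmonic_scal/harmonic_Liter_top.
set u := fun y => monom N.+1 (depth o parent y) * hN y.
have Liter_u j : Liter o parent q lam j u =
    fun x => lam ^ j * iter j fdiff (monom N.+1) (depth o parent x) * hN x.
  exact: Liter_depth_mul.
have [|h [Hh Eh]] := IH (fun y => f y - u y).
  apply: polyharmonic_sub Hf _ _ => [j|x]; rewrite Liter_u.
    by apply: (@Qdef_depth_mul (fun m => lam ^ j * iter j fdiff (monom N.+1) m)); case: harmonic_hN.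
  by rewrite iter_fdiff_monom_diag /hN -/c -/g; field.
exists (fun k => if (k <= N)%N then h k else hN); split.
  by move=> k _; case: ifP => [/Hh|_].
move=> x; rewrite depth_sumS ltnn.
have -> : depth_sum monom (fun k => if (k <= N)%N then h k else hN) N x = depth_sum monom h N x.
  by apply: sum_n_ext_loc => k /leP ->.
by rewrite -Eh /u; ring.
Qed.

Lemma monom_expansion_top_unique h h' N x :
  (forall k, (k <= N)%N -> harmonic o parent q lam (h k)) ->
  (forall k, (k <= N)%N -> harmonic o parent q lam (h' k)) ->
  (forall y, depth_sum monom h N y = depth_sum monom h' N y) ->
  h N x = h' N x.
Proof.
move=> Hh Hh' E; apply: (Cmult_reg_l (@Cpow_fdiff_top_neq0 N)).
by rewrite -!Liter_monom_sum_top // (functional_extensionality _ _ E).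
Qed.

Lemma monom_expansion_unique h h' N :
  (forall k, (k <= N)%N -> harmonic o parent q lam (h k)) ->
  (forall k, (k <= N)%N -> harmonic o parent q lam (h' k)) ->
  (forall x, depth_sum monom h N x = depth_sum monom h' N x) ->
  forall k, (k <= N)%N -> forall x, h k x = h' k x.
Proof.
elim: N => [|N IH] Hh Hh' E k.
  by rewrite leqn0 => /eqP -> x; apply: monom_expansion_top_unique.
rewrite leq_eqVlt => /orP [/eqP -> x|lt_kN]; first exact: monom_expansion_top_unique.
apply: IH lt_kN => [j le_jN|j le_jN|y]; [exact/Hh/leqW | exact/Hh'/leqW |].
have := E y; rewrite !depth_sumS (monom_expansion_top_unique y Hh Hh' E).
exact: (@plus_reg_r C_AbelianGroup).
Qed.

End Tree.

Theorem corollary6p3 (T : countType) (o : T) (parent : T -> T) (q : T -> T -> R)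
  (lam : C) (n : nat) (f : T -> C) :
  rooted_tree o parent ->
  stochastic_forward o parent q ->
  lam <> RtoC 0 ->
  (1 <= n)%N ->
  polyharmonic o parent q lam n f ->
  exists h : nat -> T -> C,
    (forall k, (k < n)%N -> harmonic o parent q lam (h k)) /\
    (forall x, f x = poly_expansion o parent n h x) /\
    (forall h' : nat -> T -> C,
       (forall k, (k < n)%N -> harmonic o parent q lam (h' k)) ->
       (forall x, f x = poly_expansion o parent n h' x) ->
       forall k, (k < n)%N -> forall x, h' k x = h k x).
Proof.
move=> rooted _ lam_neq0; case: n => [//|N] _ Hf.
have expansionE h x : poly_expansion o parent N.+1 h x = depth_sum o parent monom h N x.
  by rewrite /poly_expansion subn1.
have [h [Hh Ef]] := polyharmonic_monom_expansion rooted lam_neq0 Hf.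
exists h; split=> //; split=> [x|h' Hh' Ef' k lt_kN x]; first by rewrite Ef expansionE.
symmetry; apply: (monom_expansion_unique rooted lam_neq0 Hh Hh') lt_kN x => y.
by rewrite -Ef -expansionE -Ef'.
Qed.
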